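(* Let $(\mathcal{X},\rho)$ be a metric space and $0<\varepsilon<1/32$. Let $x_1,\dots,x_m\in\mathcal{X}$ with labels $y_1,\dots,y_m\in\{-1,1\}$, let $S^+=\{x_i:y_i=1\}$ and $S^-=\{x_i:y_i=-1\}$ be both nonempty, and assume $\rho(S^+,S^-)>0$. Define $$f(x)=\min_{i\in[m]}T\Big(y_i+\frac{2\rho(x,x_i)}{\rho(S^+,S^-)}\Big),$$ where $T(z)=\max\{-1,\min\{1,z\}\}$. Let $\tilde\rho$ be a number with $1\le\tilde\rho/\rho(S^+,S^-)\le1+\varepsilon$. For $x\in\mathcal{X}$, let $a^+,a^-\in[m]$ be any indices with $x_{a^+}\in S^+$, $x_{a^-}\in S^-$, $\rho(x,x_{a^+})\le(1+\varepsilon)\rho(x,S^+)$ and $\rho(x,x_{a^-})\le(1+\varepsilon)\rho(x,S^-)$, and define $$\tilde f(x)=\min_{a\in\{a^+,a^-\}}T\Big(y_a+\frac{2\rho(x,x_a)}{\tilde\rho}\Big).$$ Then $|f(x)-\tilde f(x)|\le2\varepsilon$ for every $x\in\mathcal{X}$ (for any such choice of $a^+,a^-$).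
   Context: $\rho(A,B)=\inf_{a\in A,b\in B}\rho(a,b)$ and $\rho(x,A)=\inf_{a\in A}\rho(x,a)$. *)

From Stdlib Require Import Reals List.
Import ListNotations.
Open Scope R_scope.

Definition is_metric {X : Type} (rho : X -> X -> R) : Prop :=
  (forall a b, 0 <= rho a b) /\
  (forall a b, rho a b = 0 <-> a = b) /\
  (forall a b, rho a b = rho b a) /\
  (forall a b c, rho a c <= rho a b + rho b c).

(* Minimum of a finite nonempty list of reals (= its infimum); 0 on nil. *)
Definition minl (l : list R) : R :=
  match l with
  | nil => 0
  | a :: t => fold_left Rmin t a
  end.

Definition T (z : R) : R := Rmax (-1) (Rmin 1 z).

Definition Reqb (a b : R) : bool := if Req_EM_T a b then true else false.

(* Indices i in [m] = {0,...,m-1} with label y_i = s. *)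
Definition idx_lab (m : nat) (y : nat -> R) (s : R) : list nat :=
  filter (fun i => Reqb (y i) s) (seq 0 m).

(* rho(z, S^s) = inf_{i : y_i = s} rho(z, x_i)  (finite, so a min). *)
Definition dist_pt {X : Type} (rho : X -> X -> R) (m : nat) (x : nat -> X)
  (y : nat -> R) (s : R) (z : X) : R :=
  minl (map (fun i => rho z (x i)) (idx_lab m y s)).

Definition dist_sets {X : Type} (rho : X -> X -> R) (m : nat) (x : nat -> X)
  (y : nat -> R) : R :=
  minl (flat_map (fun i => map (fun j => rho (x i) (x j)) (idx_lab m y (-1)))
                 (idx_lab m y 1)).

Definition f_full {X : Type} (rho : X -> X -> R) (m : nat) (x : nat -> X)
  (y : nat -> R) (z : X) : R :=
  minl (map (fun i => T (y i + 2 * rho z (x i) / dist_sets rho m x y)) (seq 0 m)).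

Definition f_approx {X : Type} (rho : X -> X -> R) (x : nat -> X)
  (y : nat -> R) (rt : R) (ap an : nat) (z : X) : R :=
  Rmin (T (y ap + 2 * rho z (x ap) / rt)) (T (y an + 2 * rho z (x an) / rt)).

From Stdlib Require Import Reals List Lra Lia.
Open Scope R_scope.

(* With labels in {-1, 1}, every positive term of f is
   T(1 + nonneg) = 1, the largest value of T, while the negative terms
   are monotone in the distance; hence f(z) = T(-1 + 2 w / D) where
   w = rho(z, S^-) and D = rho(S^+, S^-).  For the same reasons
   f~(z) = T(-1 + 2 r / rt) where r = rho(z, x_{a^-}).  Since
   w <= r <= (1+eps) w and D <= rt <= (1+eps) D, the ratios u = w/D and
   v = r/rt agree up to a factor 1+eps in both directions, and on
   nonnegative arguments T(-1 + 2u) = -1 + 2 min(u, 1), so the two values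
   differ by at most 2 eps. *)

Lemma fold_min_le (t : list R) (a : R) :
  fold_left Rmin t a <= a /\ forall b, In b t -> fold_left Rmin t a <= b.
Proof.
  revert a; induction t as [|c t IH]; intros a; simpl.
  - split; [lra | tauto].
  - destruct (IH (Rmin a c)) as [Ha Ht]; split.
    + pose proof (Rmin_l a c); lra.
    + intros b [<- | Hb]; [pose proof (Rmin_r a c); lra | auto].
Qed.

Lemma minl_le (l : list R) (b : R) : In b l -> minl l <= b.
Proof.
  destruct l as [|a t]; [intros [] | simpl].
  destruct (fold_min_le t a) as [Ha Ht]; intros [<- | Hb]; auto.
Qed.

Lemma fold_min_in (t : list R) (a : R) :
  fold_left Rmin t a = a \/ In (fold_left Rmin t a) t.
Proof.
  revert a; induction t as [|c t IH]; intros a; simpl; [auto |].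
  destruct (IH (Rmin a c)) as [E | E]; [rewrite E | auto].
  unfold Rmin; destruct (Rle_dec a c); auto.
Qed.

Lemma minl_in (l : list R) : l <> nil -> In (minl l) l.
Proof.
  destruct l as [|a t]; [congruence | intros _; simpl].
  destruct (fold_min_in t a); [left | right]; auto.
Qed.

Lemma minl_eq (l : list R) (c : R) :
  In c l -> (forall b, In b l -> c <= b) -> minl l = c.
Proof.
  intros Hc Hlow; apply Rle_antisym; [now apply minl_le |].
  apply Hlow, minl_in; intros E; rewrite E in Hc; destruct Hc.
Qed.

Lemma idx_lab_In (m : nat) (y : nat -> R) (s : R) (i : nat) :
  In i (idx_lab m y s) <-> (i < m)%nat /\ y i = s.
Proof.
  unfold idx_lab, Reqb; rewrite filter_In, in_seq.
  destruct (Req_EM_T (y i) s); intuition (try lia; try congruence).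
Qed.

Lemma dist_pt_le {X : Type} (rho : X -> X -> R) (m : nat) (x : nat -> X)
  (y : nat -> R) (s : R) (z : X) (i : nat) :
  (i < m)%nat -> y i = s -> dist_pt rho m x y s z <= rho z (x i).
Proof.
  intros Him Hyi; apply minl_le, in_map_iff; exists i.
  split; [reflexivity | now apply idx_lab_In].
Qed.

Lemma dist_pt_attained {X : Type} (rho : X -> X -> R) (m : nat) (x : nat -> X)
  (y : nat -> R) (s : R) (z : X) (i : nat) :
  (i < m)%nat -> y i = s ->
  exists j, (j < m)%nat /\ y j = s /\ dist_pt rho m x y s z = rho z (x j).
Proof.
  intros Him Hyi.
  assert (Hne : map (fun k => rho z (x k)) (idx_lab m y s) <> nil).
  { intros E; assert (Hi : In i (idx_lab m y s)) by now apply idx_lab_In.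
    apply (in_map (fun k => rho z (x k))) in Hi; rewrite E in Hi; destruct Hi. }
  apply minl_in, in_map_iff in Hne; destruct Hne as [j [E Hj]].
  apply idx_lab_In in Hj; exists j; unfold dist_pt; rewrite <- E; tauto.
Qed.

Lemma T_le_1 (a : R) : T a <= 1.
Proof. unfold T, Rmax, Rmin; repeat destruct Rle_dec; lra. Qed.

Lemma T_ge1 (a : R) : 1 <= a -> T a = 1.
Proof. unfold T, Rmax, Rmin; repeat destruct Rle_dec; lra. Qed.

Lemma T_mono (a b : R) : a <= b -> T a <= T b.
Proof. unfold T, Rmax, Rmin; repeat destruct Rle_dec; lra. Qed.

Lemma T_affine (u : R) : 0 <= u -> T (-1 + 2 * u) = -1 + 2 * Rmin u 1.
Proof. unfold T, Rmax, Rmin; repeat destruct Rle_dec; lra. Qed.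

Lemma T_pos_term (d : R) : 0 <= d -> T (1 + 2 * d) = 1.
Proof. intros; apply T_ge1; lra. Qed.

Lemma f_full_closed_form {X : Type} (rho : X -> X -> R) (m : nat)
  (x : nat -> X) (y : nat -> R) (z : X) (i : nat) :
  (forall a b, 0 <= rho a b) ->
  (forall k, (k < m)%nat -> y k = 1 \/ y k = -1) ->
  (i < m)%nat -> y i = -1 ->
  0 < dist_sets rho m x y ->
  f_full rho m x y z
  = T (-1 + 2 * (dist_pt rho m x y (-1) z / dist_sets rho m x y)).
Proof.
  intros Hnn Hy Him Hyi HD; unfold f_full.
  set (D := dist_sets rho m x y) in *.
  destruct (dist_pt_attained rho m x y (-1) z i Him Hyi) as [j [Hjm [Hyj Ew]]].
  rewrite Ew; apply minl_eq.
  - apply in_map_iff; exists j; split; [| apply in_seq; lia].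
    rewrite Hyj; f_equal; unfold Rdiv; ring.
  - intros b Hb; apply in_map_iff in Hb; destruct Hb as [k [<- Hk]].
    apply in_seq in Hk; assert (Hkm : (k < m)%nat) by lia.
    assert (Hdiv : forall r, r / D = / D * r) by (intros; unfold Rdiv; ring).
    replace (2 * rho z (x k) / D) with (2 * (rho z (x k) / D))
      by (unfold Rdiv; ring).
    destruct (Hy k Hkm) as [Hyk | Hyk]; rewrite Hyk.
    + rewrite T_pos_term; [apply T_le_1 |].
      rewrite Hdiv; apply Rmult_le_pos; [apply Rlt_le, Rinv_0_lt_compat |]; auto.
    + apply T_mono; rewrite !Hdiv.
      assert (rho z (x j) <= rho z (x k)) by (rewrite <- Ew; now apply dist_pt_le).
      assert (0 < / D) by (now apply Rinv_0_lt_compat).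
      nra.
Qed.

(* Closed form of f~: the positive anchor never realizes the minimum. *)
Lemma f_approx_closed_form {X : Type} (rho : X -> X -> R) (x : nat -> X)
  (y : nat -> R) (rt : R) (ap an : nat) (z : X) :
  (forall a b, 0 <= rho a b) -> 0 < rt -> y ap = 1 -> y an = -1 ->
  f_approx rho x y rt ap an z = T (-1 + 2 * (rho z (x an) / rt)).
Proof.
  intros Hnn Hrt Hyap Hyan; unfold f_approx; rewrite Hyap, Hyan.
  replace (2 * rho z (x ap) / rt) with (2 * (rho z (x ap) / rt))
    by (unfold Rdiv; ring).
  replace (2 * rho z (x an) / rt) with (2 * (rho z (x an) / rt))
    by (unfold Rdiv; ring).
  rewrite T_pos_term.
  - apply Rmin_right, T_le_1.
  - apply Rmult_le_pos; [apply Hnn | now apply Rlt_le, Rinv_0_lt_compat].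
Qed.

Lemma ratio_close (w r D rt e : R) :
  0 <= e -> 0 <= w -> 0 < D ->
  w <= r <= (1 + e) * w -> D <= rt <= (1 + e) * D ->
  r / rt <= (1 + e) * (w / D) /\ w / D <= (1 + e) * (r / rt).
Proof.
  intros He Hw HD [Hr1 Hr2] [Ht1 Ht2].
  assert (Hrt : 0 < rt) by lra.
  split.
  - apply (Rmult_le_reg_r (rt * D)); [nra |].
    replace (r / rt * (rt * D)) with (r * D) by (field; lra).
    replace ((1 + e) * (w / D) * (rt * D)) with ((1 + e) * w * rt) by (field; lra).
    nra.
  - apply (Rmult_le_reg_r (rt * D)); [nra |].
    replace (w / D * (rt * D)) with (w * rt) by (field; lra).
    replace ((1 + e) * (r / rt) * (rt * D)) with ((1 + e) * r * D) by (field; lra).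
    nra.
Qed.

Lemma Rmin_1_close (u v e : R) :
  0 <= e -> 0 <= u -> 0 <= v -> v <= (1 + e) * u -> u <= (1 + e) * v ->
  Rabs (Rmin u 1 - Rmin v 1) <= e.
Proof.
  intros He Hu Hv Hvu Huv; apply Rabs_le.
  unfold Rmin; repeat destruct Rle_dec; split; nra.
Qed.

Lemma T_relative_close (u v e : R) :
  0 <= e -> 0 <= u -> 0 <= v -> v <= (1 + e) * u -> u <= (1 + e) * v ->
  Rabs (T (-1 + 2 * u) - T (-1 + 2 * v)) <= 2 * e.
Proof.
  intros He Hu Hv Hvu Huv; rewrite !T_affine by assumption.
  replace (-1 + 2 * Rmin u 1 - (-1 + 2 * Rmin v 1))
    with (2 * (Rmin u 1 - Rmin v 1)) by ring.
  rewrite Rabs_mult, Rabs_right by lra.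
  apply Rmult_le_compat_l; [lra | now apply Rmin_1_close].
Qed.

Theorem mainTheorem6 (X : Type) (rho : X -> X -> R) (eps : R)
  (m : nat) (x : nat -> X) (y : nat -> R) (rt : R) :
  is_metric rho ->
  0 < eps -> eps < 1 / 32 ->
  (forall i, (i < m)%nat -> y i = 1 \/ y i = -1) ->
  (exists i, (i < m)%nat /\ y i = 1) ->
  (exists i, (i < m)%nat /\ y i = -1) ->
  0 < dist_sets rho m x y ->
  1 <= rt / dist_sets rho m x y <= 1 + eps ->
  forall (z : X) (ap an : nat),
    (ap < m)%nat -> y ap = 1 ->
    (an < m)%nat -> y an = -1 ->
    rho z (x ap) <= (1 + eps) * dist_pt rho m x y 1 z ->
    rho z (x an) <= (1 + eps) * dist_pt rho m x y (-1) z ->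
    Rabs (f_full rho m x y z - f_approx rho x y rt ap an z) <= 2 * eps.
Proof.
  intros [Hnn _] He _ Hy _ _ HD Hrt z ap an _ Hyap Han Hyan _ Hr.
  set (D := dist_sets rho m x y) in *.
  set (w := dist_pt rho m x y (-1) z) in *.
  assert (HrtD : D <= rt <= (1 + eps) * D).
  { replace rt with (rt / D * D) by (field; lra); split; nra. }
  assert (Hw : 0 <= w).
  { unfold w; destruct (dist_pt_attained rho m x y (-1) z an Han Hyan) as [j [_ [_ ->]]].
    apply Hnn. }
  assert (Hwr : w <= rho z (x an)) by (now apply dist_pt_le).
  destruct (ratio_close w (rho z (x an)) D rt eps) as [Hvu Huv]; try lra.
  assert (Hu : 0 <= w / D) by (apply Rmult_le_pos; [| apply Rlt_le, Rinv_0_lt_compat]; lra).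
  assert (Hv : 0 <= rho z (x an) / rt)
    by (apply Rmult_le_pos; [apply Hnn | apply Rlt_le, Rinv_0_lt_compat; lra]).
  rewrite (f_full_closed_form rho m x y z an), (f_approx_closed_form rho x y rt ap an z);
    auto; try lra.
  fold D w; apply T_relative_close; lra.
Qed.
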